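(* For every set $S\subseteq V$ of vaccinated nodes, the expected total reward equals $$r(S)=\sum_{i\in S}\Big|N_i\setminus \bigcup_{j\in N_i\cap S}N_j\Big|\,\mathbb{P}\{Z_i>\tau\}=\sum_{i\in S}\Big(n_i-\Big|\bigcup_{j\in N_i\cap S}N_j\Big|\Big)\mathbb{P}\{Z_i>\tau\}.$$
   Context: Let $G=(V,E)$ be a finite tree with $|V|=n$, rooted at a node $s$ (the infection source). For a node $i$: $d_i$ is its depth (number of edges on the path from $s$ to $i$); $A_i$ is the set of ancestors of $i$ (strict, including its parent); $N_i$ is the set of descendants of $i$ (strict, not including $i$); $n_i=|N_i|$. Each edge $e$ carries an independent random variable $X_e\sim\mathrm{Exp}(\lambda)$ with $\lambda>0$, and $Z_i=\sum_{e \text{ on the path from } s \text{ to } i}X_e$ is the infection time of $i$ (so $Z_s=0$; $Z_i$ is a sum of $d_i$ i.i.d. $\mathrm{Exp}(\lambda)$ variables). The immunization time $\tau\ge 0$ is a single random variable, common to all vaccinated nodes and independent of $(X_e)_{e\in E}$. For $S\subseteq V$ (the vaccinated set), a node $i\in S$ becomes immune iff $Z_i>\tau$, and an immune node saves all its descendants. The expected total reward is defined as $r(S)=\mathbb{E}\big[\,\big|\bigcup_{i\in S:\,Z_i>\tau}N_i\big|\,\big]$, the expected number of nodes that are descendants of at least one immune vaccinated node. *)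

From HB Require Import structures.
From mathcomp Require Import all_boot all_order all_algebra.
From mathcomp Require Import all_classical all_reals all_analysis.
Set Implicit Arguments. Unset Strict Implicit. Unset Printing Implicit Defensive.
Import Order.TTheory GRing.Theory Num.Theory.
Local Open Scope classical_set_scope.
Local Open Scope ring_scope.

(* A finite tree on the finite type V rooted at s is given by a parent map
   par : V -> V with par s = s and such that every node reaches the root
   by iterating par (at most #|V| times). *)
Definition is_rooted_tree (V : finType) (par : V -> V) (s : V) : Prop :=
  par s = s /\ forall i : V, iter #|V| par i = s.

Definition is_ancestor (V : finType) (par : V -> V) (j i : V) : bool :=
  [exists k : 'I_#|V|.+1, (0 < (k : nat))%N && (iter k par i == j)] && (j != i).

Definition descendants (V : finType) (par : V -> V) (i : V) : {set V} :=
  [set j | is_ancestor par i j].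

(* edges of the tree, indexed by their child endpoint (a non-root node) *)
Definition edge (V : finType) (s : V) : finType := {i : V | i != s}.

(* Z_i(w) = sum of the edge variables on the path from s to i; the edges on
   that path are those whose child endpoint is i or a strict ancestor of i *)
Definition infection_time (V : finType) (par : V -> V) (s : V) (T : Type)
  (R : realType) (X : edge s -> T -> R) (w : T) (i : V) : R :=
  \sum_(e : edge s | (val e == i) || is_ancestor par (val e) i) X e w.

Definition mutually_independent d (T : measurableType d) (R : realType)
  (P : probability T R) (I : finType) (Y : I -> {RV P >-> R}) : Prop :=
  forall B : I -> set R, (forall i, measurable (B i)) ->
    P (\bigcap_(i in [set: I]) (Y i @^-1` B i)) =
    (\prod_(i : I) P (Y i @^-1` B i))%E.

Definition edge_tau_family d (T : measurableType d) (R : realType)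
  (P : probability T R) (V : finType) (s : V)
  (X : edge s -> {RV P >-> R}) (tau : {RV P >-> R}) : option (edge s) -> {RV P >-> R} :=
  fun o => match o with Some e => X e | None => tau end.

Definition saved_set (V : finType) (par : V -> V) (s : V) (T : Type)
  (R : realType) (X : edge s -> T -> R) (tau : T -> R) (S : {set V}) (w : T) : {set V} :=
  [set k | [exists i in S, (tau w < infection_time par X w i) && (k \in descendants par i)]].

Definition reward d (T : measurableType d) (R : realType) (P : probability T R)
  (V : finType) (par : V -> V) (s : V) (X : edge s -> {RV P >-> R})
  (tau : {RV P >-> R}) (S : {set V}) : \bar R :=
  'E_P[fun w => (#|saved_set par (fun e => X e : T -> R) tau S w|)%:R].

From HB Require Import structures.
From mathcomp Require Import all_boot all_order all_algebra.
From mathcomp Require Import all_classical all_reals all_analysis.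
From mathcomp Require Import measurable_realfun.
Import Order.TTheory GRing.Theory Num.Theory.
Set Implicit Arguments. Unset Strict Implicit. Unset Printing Implicit Defensive.

(* For i in S let M_i := N_i minus the union of the N_j, j in N_i ∩ S, be the
   "private" descendants of i: those having no vaccinated node strictly
   between i and themselves.  The proof has a combinatorial and a
   probabilistic half.
   - Combinatorics: if A is a set of nodes closed under taking descendants,
     every node below some vaccinated node of A is a private descendant of
     exactly one vaccinated node (its deepest vaccinated ancestor), which is
     again in A; hence #{k | exists i in S ∩ A, k in N_i} = sum_(i in S ∩ A) |M_i|.
   - Probability: the edge variables are exponential, hence a.s. nonnegative,
     so infection times grow away from the root and the set of immune nodes
     {i | tau < Z_i} is a.s. closed under descendants.  The number of saved
     nodes is then a.s. sum_(i in S) |M_i| 1{tau < Z_i}, and taking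
     expectations gives r(S) = sum_(i in S) |M_i| P(tau < Z_i).
   The second form follows from |M_i| = n_i - |U_(j in N_i ∩ S) N_j|. *)

Section RootedTree.
Variables (V : finType) (par : V -> V) (s : V).
Hypothesis tree : is_rooted_tree par s.
Local Notation N := (descendants par).

Lemma iter_par_root n : iter n par s = s.
Proof. by case: tree => par_s _; elim: n => //= n ->. Qed.

Lemma iter_par_large n i : #|V| <= n -> iter n par i = s.
Proof.
by move=> leVn; rewrite -(subnK leVn) iterD; case: tree => _ ->; exact: iter_par_root.
Qed.

Lemma is_ancestorP j i :
  reflect ((exists2 k, 0 < k & iter k par i = j) /\ j != i) (is_ancestor par j i).
Proof.
apply: (iffP idP).
  rewrite /is_ancestor => /andP[/existsP[k /andP[k_gt0 /eqP iter_k]] ne].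
  by split=> //; exists k.
case=> [[k k_gt0 iter_k] ne]; rewrite /is_ancestor ne andbT; apply/existsP.
have V_gt0 : 0 < #|V| by apply/card_gt0P; exists s.
case: (leqP k #|V|) => [leVk | ltVk].
  by exists (Ordinal (leVk : k < #|V|.+1)); rewrite /= k_gt0 iter_k eqxx.
exists (Ordinal (leqnn #|V|.+1)); rewrite /= V_gt0 /=.
by rewrite iter_par_large // -iter_k iter_par_large // ltnW.
Qed.

Lemma is_ancestor_irrefl i : ~~ is_ancestor par i i.
Proof. by rewrite /is_ancestor eqxx andbF. Qed.

(* Acyclicity (a <> c) holds because a cycle through c would never reach s. *)
Lemma is_ancestor_trans a b c :
  is_ancestor par a b -> is_ancestor par b c -> is_ancestor par a c.
Proof.
move=> /is_ancestorP[[k2 k2_gt0 iter_k2] ne_ab] /is_ancestorP[[k1 _ iter_k1] ne_bc].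
apply/is_ancestorP; split.
  by exists (k2 + k1); [rewrite addn_gt0 k2_gt0 | rewrite iterD iter_k1].
apply: contra ne_bc => /eqP eq_ac; subst a.
have cycle m : iter (m * (k2 + k1)) par c = c.
  by elim: m => [|m IHm] //; rewrite mulSn iterD IHm iterD iter_k1.
have c_root : c = s.
  rewrite -(cycle #|V|) iter_par_large //.
  by rewrite -{1}(muln1 #|V|) leq_mul2l addn_gt0 k2_gt0 orbT.
by rewrite -iter_k1 c_root iter_par_root.
Qed.

Lemma is_ancestor_total i i' k :
  is_ancestor par i k -> is_ancestor par i' k ->
  [\/ i = i', is_ancestor par i i' | is_ancestor par i' i].
Proof.
have along a b k1 k2 : k1 <= k2 -> iter k1 par k = a -> iter k2 par k = b ->
    a = b \/ is_ancestor par b a.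
  move=> le12 iter1 iter2; case: (eqVneq a b) => [->|ne_ab]; first by left.
  right; apply/is_ancestorP; split; last by rewrite eq_sym.
  exists (k2 - k1); last by rewrite -iter1 -iterD subnK.
  rewrite subn_gt0 ltn_neqAle le12 andbT; apply: contra ne_ab => /eqP eq12.
  by rewrite -iter1 -iter2 eq12.
move=> /is_ancestorP[[k1 _ iter1] _] /is_ancestorP[[k2 _ iter2] _].
case: (leqP k1 k2) => [le12 | /ltnW le21].
  by case: (along _ _ _ _ le12 iter1 iter2) => [->|?]; [constructor 1|constructor 3].
by case: (along _ _ _ _ le21 iter2 iter1) => [->|?]; [constructor 1|constructor 2].
Qed.

(* Descendant sets shrink strictly downwards; used to pick the deepest
   vaccinated ancestor of a node as one minimising |N_i|. *)
Lemma descendants_proper i j : j \in N i -> N j \proper N i.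
Proof.
rewrite inE => anc_ij; rewrite finset.properEneq; apply/andP; split.
  apply: contraTneq anc_ij => eqN; have : j \notin N j by rewrite inE is_ancestor_irrefl.
  by rewrite eqN inE.
by apply/fintype.subsetP => k; rewrite !inE; exact: is_ancestor_trans.
Qed.

Definition private_descendants (S : {set V}) (i : V) : {set V} :=
  N i :\: \bigcup_(j in N i :&: S) N j.

Lemma bigcup_descendants_sub S i : \bigcup_(j in N i :&: S) N j \subset N i.
Proof.
by apply/bigcupsP => j; rewrite inE => /andP[/descendants_proper/proper_sub].
Qed.

Variable S : {set V}.
Local Notation M := (private_descendants S).

Lemma card_private_descendants (R : ringType) i :
  (#|M i|%:R = #|N i|%:R - #|\bigcup_(j in N i :&: S) N j|%:R :> R)%R.
Proof.
have U_sub := bigcup_descendants_sub S i.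
by rewrite cardsD (finset.setIidPr U_sub) natrB // subset_leq_card.
Qed.

Lemma private_descendants_uniq k i i' :
  i \in S -> i' \in S -> k \in M i -> k \in M i' -> i = i'.
Proof.
move=> iS i'S; rewrite !inE => /andP[notU k_i] /andP[notU' k_i'].
case: (is_ancestor_total k_i k_i') => // anc.
  by case/finset.bigcupP: notU; exists i'; rewrite ?inE ?anc ?i'S.
by case/finset.bigcupP: notU'; exists i; rewrite ?inE ?anc ?iS.
Qed.

(* Every descendant k of a vaccinated node i0 is a private descendant of its
   deepest vaccinated ancestor i, which lies at or below i0. *)
Lemma private_descendants_cover k i0 : i0 \in S -> k \in N i0 ->
  exists2 i, i \in S & (k \in M i) && ((i == i0) || is_ancestor par i0 i).
Proof.
move=> i0S k_i0.
have [i /andP[iS k_i] i_min] :=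
  @arg_minnP V i0 (fun i => (i \in S) && (k \in N i)) (fun i => #|N i|)
    (introT andP (conj i0S k_i0)).
have k_Mi : k \in M i.
  rewrite inE k_i andbT; apply/finset.bigcupP => -[j]; rewrite inE => /andP[j_i jS] k_j.
  have := i_min j; rewrite /= jS k_j => /(_ isT).
  by rewrite leqNgt proper_card // descendants_proper.
exists i => //; rewrite k_Mi /=.
move: k_i k_i0; rewrite !inE => k_i k_i0.
case: (is_ancestor_total k_i k_i0) => [->|anc|->]; rewrite ?eqxx ?orbT //.
move: k_Mi; rewrite inE => /andP[/finset.bigcupP notU _]; case: notU.
by exists i0; rewrite ?inE ?anc ?i0S.
Qed.

Section ClosedSet.
Variable A : pred V.
Hypothesis A_closed : forall i j, is_ancestor par i j -> A i -> A j.

Lemma card_private_owners k :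
  #|[set i in S | A i && (k \in M i)]| = [exists i in S, A i && (k \in N i)].
Proof.
case: existsP => [[i0 /and3P[i0S Ai0 k_i0]] | none].
  have [i iS /andP[k_Mi i_below]] := private_descendants_cover i0S k_i0.
  have Ai : A i by case/orP: i_below => [/eqP->|/A_closed]; exact.
  apply/eqP/cards1P; exists i; apply/finset.setP => j.
  rewrite finset.in_set finset.in_set1.
  apply/idP/eqP => [/and3P[jS _ k_Mj] | ->]; last by rewrite iS Ai k_Mi.
  exact: private_descendants_uniq k_Mj k_Mi.
apply/eqP; rewrite cards_eq0; apply/eqP/finset.setP => j.
rewrite finset.in_set finset.in_set0.
apply/negP => /and3P[jS Aj]; rewrite inE => /andP[_ k_j].
by apply: none; exists j; rewrite jS Aj.
Qed.

Lemma card_saved_nodes :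
  #|[set k | [exists i in S, A i && (k \in N i)]]| =
  \sum_(i in S) #|M i| * A i.
Proof.
transitivity (\sum_k #|[set i in S | A i && (k \in M i)]|).
  rewrite -sum1dep_card big_mkcond; apply: eq_bigr => k _.
  by rewrite card_private_owners; case: [exists _ in _, _].
under eq_bigr => k _ do rewrite -sum1dep_card big_mkcond.
rewrite exchange_big [RHS]big_mkcond; apply: eq_bigr => i _ /=.
case: (i \in S); last by rewrite big1.
case: (A i); last by rewrite muln0 big1.
by rewrite muln1 -big_mkcond sum1_card.
Qed.

End ClosedSet.

Variables (T : Type) (R : realType) (X : edge s -> T -> R) (tau : T -> R).
Local Notation Z w i := (infection_time par X w i).

Lemma infection_time_mono w i j : (forall e, 0 <= X e w)%R ->
  is_ancestor par i j -> (Z w i <= Z w j)%R.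
Proof.
move=> X_ge0 anc_ij; rewrite /infection_time big_mkcond [leRHS]big_mkcond /=.
apply: ler_sum => e _; case: ifPn => [on_path_i | _]; last by case: ifP.
rewrite ifT //; case/orP: on_path_i => [/eqP-> | anc_ei]; apply/orP; right => //.
exact: is_ancestor_trans anc_ei anc_ij.
Qed.

Lemma card_saved_set w : (forall e, 0 <= X e w)%R ->
  #|saved_set par X tau S w| = \sum_(i in S) #|M i| * (tau w < Z w i)%R.
Proof.
move=> X_ge0; apply: card_saved_nodes => i j anc_ij /= immune_i.
exact: lt_le_trans immune_i (infection_time_mono X_ge0 anc_ij).
Qed.

End RootedTree.

Local Open Scope classical_set_scope.
Local Open Scope ring_scope.

Section IndicatorCombination.
Context d (T : measurableType d) (R : realType) (I : finType) (J : pred I).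
Variables (c : I -> R) (A : I -> set T).
Hypothesis mA : forall i, measurable (A i).

Lemma measurable_indic_comb :
  measurable_fun setT (fun w => \sum_(i | J i) c i * \1_(A i) w).
Proof.
have -> : (fun w => \sum_(i | J i) c i * \1_(A i) w) =
    fun w => \sum_(i <- index_enum I) (if J i then c i * \1_(A i) w else 0).
  by apply/funext => w; rewrite big_mkcond.
apply: measurable_sum => i; case: (J i); last exact: measurable_cst.
by apply: measurable_funM; [exact: measurable_cst | exact: measurable_indic].
Qed.

Lemma integral_indic_comb (mu : {measure set T -> \bar R}) :
  (forall i, 0 <= c i) ->
  (\int[mu]_w (\sum_(i | J i) c i * \1_(A i) w)%:E =
   \sum_(i | J i) (c i)%:E * mu (A i))%E.
Proof.
move=> c_ge0; under eq_integral do rewrite -sumEFin big_mkcond.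
rewrite ge0_integral_sum ?[RHS]big_mkcond //.
- apply: eq_bigr => i _; case: (J i); last exact: integral0.
  under eq_integral do rewrite EFinM.
  rewrite ge0_integralZl ?lee_fin ?integral_indic ?setIT //.
  exact/measurable_EFinP/measurable_indic.
- move=> i; case: (J i); last exact: measurable_cst.
  apply/measurable_EFinP/measurable_funM; first exact: measurable_cst.
  exact: measurable_indic.
- by move=> i w _; case: (J i); rewrite // lee_fin mulr_ge0.
Qed.

End IndicatorCombination.

Lemma measurable_card d (T : measurableType d) (R : realType) (V : finType)
    (B : T -> {set V}) :
  (forall k, measurable [set w | k \in B w]) ->
  measurable_fun setT (fun w => (#|B w|%:R : R)).
Proof.
move=> mB; have -> : (fun w => (#|B w|%:R : R)) =
    (fun w => \sum_(k <- index_enum V) \1_[set w | k \in B w] w).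
  apply/funext => w; rewrite -sum1_card natr_sum big_mkcond.
  apply: eq_bigr => k _; rewrite indicE; case: (boolP (k \in B w)) => kB.
    by rewrite mem_set.
  by rewrite memNset //; exact/negP.
by apply: measurable_sum => k; exact: measurable_indic.
Qed.

Lemma exponential_ge0_ae d (T : measurableType d) (R : realType)
    (P : probability T R) (lambda : R) (Y : {RV P >-> R}) :
  (forall B : set R, measurable B ->
     distribution P Y B = exponential_prob lambda B) ->
  {ae P, forall w, 0 <= Y w}.
Proof.
move=> lawY; exists (Y @^-1` `]-oo, 0[); split.
- by apply: measurable_funPTI; exact: measurable_itv.
- have := lawY _ (measurable_itv `]-oo, 0[).
  rewrite /distribution /pushforward => ->.
  apply: integral0_eq => x; rewrite /= in_itv /= => x_lt0.
  by rewrite lt0_exponential_pdf.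
- by move=> w /=; rewrite in_itv /= ltNge => /negP.
Qed.

Section Reward.
Context (d : measure_display) (T : measurableType d) (R : realType)
  (P : probability T R) (V : finType) (par : V -> V) (s : V)
  (X : edge s -> {RV P >-> R}) (tau : {RV P >-> R}).
Hypothesis tree : is_rooted_tree par s.
Local Notation Z w i := (infection_time par (fun e => X e : T -> R) w i).
Local Notation saved S w := (saved_set par (fun e => X e : T -> R) tau S w).

Definition immune_event (i : V) : set T := [set w | tau w < Z w i].

Lemma measurable_infection_time i : measurable_fun setT (fun w => Z w i).
Proof.
rewrite /infection_time.
have -> : (fun w => \sum_(e | (val e == i) || is_ancestor par (val e) i) X e w) =
    fun w => \sum_(e <- index_enum (edge s))
    (if (val e == i) || is_ancestor par (val e) i then X e w else 0).
  by apply/funext => w; rewrite big_mkcond.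
apply: measurable_sum => e; case: ((val e == i) || is_ancestor par (val e) i).
  exact: measurable_funP.
exact: measurable_cst.
Qed.

Lemma measurable_immune_event i : measurable (immune_event i).
Proof.
have -> : immune_event i = setT `&` (fun w => tau w < Z w i) @^-1` [set true].
  by rewrite setTI; apply/seteqP; split => w /=.
exact: measurable_fun_ltr (measurable_funP tau) (measurable_infection_time i) _ _ _.
Qed.

Lemma measurable_saved_count S :
  measurable_fun setT (fun w => (#|saved S w|%:R : R)).
Proof.
apply: measurable_card => k.
have -> : [set w | k \in saved S w] =
    \bigcup_(i in [set i | (i \in S) && (k \in descendants par i)]) immune_event i.
  apply/seteqP; split => w; rewrite /= inE.
    by case/exists_inP => i iS /andP[immune k_i]; exists i; rewrite /= ?iS.
  by case=> i /= /andP[iS k_i] immune; apply/exists_inP; exists i; rewrite ?immune.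
apply: fin_bigcup_measurable; first exact: finite_finset.
by move=> i _; exact: measurable_immune_event.
Qed.

Lemma saved_count_indic_comb S w : (forall e, 0 <= X e w) ->
  (#|saved S w|%:R : R) =
  \sum_(i in S) #|private_descendants par S i|%:R * \1_(immune_event i) w.
Proof.
move=> X_ge0; rewrite (card_saved_set tree) // natr_sum.
apply: eq_bigr => i _; rewrite natrM indicE; congr (_ * _).
by case: (boolP (tau w < Z w i)) => immune;
  [rewrite mem_set | rewrite memNset //; exact/negP].
Qed.

Lemma reward_private_descendants S : {ae P, forall w e, 0 <= X e w} ->
  reward par X tau S =
  (\sum_(i in S) (#|private_descendants par S i|%:R)%:E * P (immune_event i))%E.
Proof.
move=> X_ge0; rewrite -integral_indic_comb; last 2 first.
- exact: measurable_immune_event.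
- by move=> i; exact: ler0n.
rewrite /reward unlock; apply: ae_eq_integral => //.
- exact/measurable_EFinP/measurable_saved_count.
- exact/measurable_EFinP/measurable_indic_comb/measurable_immune_event.
by apply: filterS X_ge0 => w X_ge0 _; rewrite saved_count_indic_comb.
Qed.

End Reward.

Theorem theorem1 (d : measure_display) (T : measurableType d) (R : realType)
  (P : probability T R) (V : finType) (par : V -> V) (s : V)
  (lambda : R) (X : edge s -> {RV P >-> R}) (tau : {RV P >-> R}) :
  is_rooted_tree par s ->
  0 < lambda ->
  (forall (e : edge s) (A : set R), measurable A ->
     distribution P (X e) A = exponential_prob lambda A) ->
  (forall w, 0 <= tau w) ->
  mutually_independent (edge_tau_family X tau) ->
  forall S : {set V},
    reward par X tau S =
      (\sum_(i in S)
        (#|descendants par i :\: (\bigcup_(j in descendants par i :&: S) descendants par j)%SET|%:R)%:E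
        * P [set w | (tau w < infection_time par (fun e => X e : T -> R) w i)%R])%E
    /\
    reward par X tau S =
      (\sum_(i in S)
        ((#|descendants par i|%:R - #|(\bigcup_(j in descendants par i :&: S) descendants par j)%SET|%:R)%:E
        * P [set w | (tau w < infection_time par (fun e => X e : T -> R) w i)%R]))%E.
Proof.
move=> tree _ law_X _ _ S.
have X_ge0 : {ae P, forall w e, 0 <= X e w}.
  by apply: filter_forall => e; exact: exponential_ge0_ae (law_X e).
have reward_eq := reward_private_descendants tau tree S X_ge0.
split; first exact: reward_eq.
rewrite reward_eq; apply: eq_bigr => i _.
by rewrite (card_private_descendants tree).
Qed.
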